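(* In the setting of the context, let $(l_u,\delta,l_0)\in\widetilde{\mathrm{CC}}(\tilde X)$, choose an isomorphism $\iota:\mathbb{C}((\tilde z))[[\lambda]]\xrightarrow{\sim}l_u$ whose reduction mod $\lambda$ maps $\mathbb{C}[[\tilde z]]$ onto $l_0$, and let $a(\tilde z,\lambda)=\sum_i a_i(\tilde z)\lambda^i\in\mathbb{C}((\tilde z))[[\lambda]]$ be defined by $(\lambda\frac{d}{d\tilde z}+a)d\tilde z=\iota^{-1}\delta\iota$. Then the essential fiber of the functor $\widetilde{\mathrm{Conn}}(\tilde X)\to\widetilde{\mathrm{CC}}(\tilde X)$ over $(l_u,\delta,l_0)$ is either empty or equivalent to a one-point set, and it is non-empty if and only if $a_1(\tilde z)\in\tilde z^{-1}\mathbb{C}[[\tilde z]]$ and $\operatorname{res}_{\tilde z=0}a(\tilde z,\lambda)=-\lambda/2$.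
   Context: Let $t,d\in\mathbb{C}[[z]]$ with $t^2-4d$ having a simple zero at $0$; $\tilde X=\operatorname{Spf}\mathbb{C}[[\tilde z]]$ is the spectral curve $\xi^2-t\xi+d=0$ over $\operatorname{Spf}\mathbb{C}[[z]]$, $\tilde z=\sqrt{t^2-4d}$, and $\mu=\xi\,dz|_{\tilde X}$. A $\lambda$-connection on a module $M$ over $\mathbb{C}((\tilde z))[[\lambda]]$ or $\mathbb{C}[[\tilde z,\lambda]]$ is a $\mathbb{C}[[\lambda]]$-linear $\delta$ with $\delta(fs)=f\delta s+\lambda s\,df$. $\widetilde{\mathrm{Conn}}(\tilde X)$: groupoid of $(l,\delta)$, $l$ free of rank 1 over $\mathbb{C}[[\tilde z,\lambda]]$, $\delta:l\to\tilde z^{-1}l\,d\tilde z$ a $\lambda$-connection with residue $-\lambda/2$ and reduction mod $\lambda$ equal to $\mu$. $\widetilde{\mathrm{CC}}(\tilde X)$: groupoid of $(l_u,\delta,l_0)$, $l_u$ free of rank 1 over $\mathbb{C}((\tilde z))[[\lambda]]$, $\delta:l_u\to l_u\,d\tilde z$ a $\lambda$-connection with reduction mod $\lambda$ equal to $\mu$, $l_0$ a $\mathbb{C}[[\tilde z]]$-lattice in $l_u/\lambda l_u$. Morphisms: isomorphisms respecting all structure. The functor sends $(l,\delta)\mapsto(l\otimes\mathbb{C}((\tilde z)),\delta,l/\lambda l)$. The essential fiber of a functor $F:G_1\to G_2$ over $\gamma_2$ is the groupoid of pairs $(\gamma_1,f)$ with $\gamma_1\in G_1$ and $f:F(\gamma_1)\xrightarrow{\sim}\gamma_2$.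 *)

From HB Require Import structures.
From mathcomp Require Import all_boot all_order all_algebra.
From mathcomp Require Import boolp.
Set Implicit Arguments. Unset Strict Implicit. Unset Printing Implicit Defensive.
Import Order.TTheory GRing.Theory Num.Theory.
Local Open Scope ring_scope.

Section Series.
Variable K : fieldType.

Definition pser := nat -> K.
Definition padd (p q : pser) : pser := fun n => p n + q n.
Definition pscale (c : K) (p : pser) : pser := fun n => c * p n.
Definition pmul (p q : pser) : pser :=
  fun n => \sum_(k < n.+1) p k * q (n - k)%N.
Definition pone : pser := fun n => (n == 0%N)%:R.
Definition ppow (p : pser) (k : nat) : pser := iter k (pmul p) pone.
(* composition f(Z(x)), meaningful when Z 0 = 0 *)
Definition ps_comp (f Z : pser) : pser :=
  fun n => \sum_(k < n.+1) f k * ppow Z k n.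
Definition pder (p : pser) : pser := fun n => p n.+1 *+ n.+1.
Definition pX : pser := fun n => (n == 1%N)%:R.

Definition lser := int -> K.
Definition laurent (f : lser) : Prop :=
  exists N : int, forall n : int, n < N -> f n = 0.
Definition lpow (f : lser) : Prop := forall n : int, n < 0 -> f n = 0.
Definition lpole1 (f : lser) : Prop := forall n : int, n < -1 -> f n = 0.
Definition ps_lift (p : pser) : lser :=
  fun n => match n with Posz k => p k | Negz _ => 0 end.
Definition ladd (f g : lser) : lser := fun n => f n + g n.
Definition lval (f : lser) : int :=
  match pselect (laurent f) with
  | left H => sval (cid H)
  | right _ => 0
  end.
Definition lmul (f g : lser) : lser := fun n =>
  let a := lval f in let b := lval g in
  if ((n - a - b)%R < 0)%R then 0
  else \sum_(k < (absz (n - a - b)%R).+1) f (a + k%:Z)%R * g (n - a - k%:Z)%R.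
Definition lder (f : lser) : lser := fun n => f (n + 1) *~ (n + 1).

Definition lattice (S : lser -> Prop) : Prop :=
  (forall f, S f -> laurent f) /\
  S (fun _ => 0) /\
  (forall f g, S f -> S g -> S (ladd f g)) /\
  (forall c f, lpow c -> S f -> S (lmul c f)) /\
  (exists gs : seq lser, (forall g, g \in gs -> S g) /\
     forall f, S f -> exists cs : seq lser, size cs = size gs /\
       (forall c, c \in cs -> lpow c) /\
       f = foldr ladd (fun _ => 0) [seq lmul cg.1 cg.2 | cg <- zip cs gs]) /\
  (forall f, laurent f -> exists c s, laurent c /\ S s /\ f = lmul c s).

(* ---------- K((x))[[y]]  (x = \tilde z, y = lambda) ---------- *)
Definition LL := nat -> lser.
Definition Lvalid (a : LL) : Prop := forall i, laurent (a i).
Definition Lint (a : LL) : Prop := forall i, lpow (a i).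
Definition Lpole1 (a : LL) : Prop := forall i, lpole1 (a i).
Definition Ladd (a b : LL) : LL := fun i n => a i n + b i n.
Definition Lmul (a b : LL) : LL :=
  fun i n => \sum_(j < i.+1) lmul (a j) (b (i - j)%N) n.
Definition Lder (a : LL) : LL := fun i => lder (a i).
Definition Llam : LL := fun i n => ((i == 1%N) && (n == 0))%:R.
Definition Lcst (c : pser) : LL := fun i n => if n == 0 then c i else 0.
Definition Lc0 (h : lser) : LL := fun i => if i == 0%N then h else (fun _ => 0).

Definition Llin (G : LL -> LL) : Prop :=
  (forall x, Lvalid x -> Lvalid (G x)) /\
  (forall x y, Lvalid x -> Lvalid y ->
     G (Ladd x y) = Ladd (G x) (G y) /\ G (Lmul x y) = Lmul x (G y)).
Definition Liso (G : LL -> LL) : Prop :=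
  Llin G /\ exists H, Llin H /\
    forall x, Lvalid x -> H (G x) = x /\ G (H x) = x.

(* lambda-connections on the module K((x))[[y]] (with values in K((x))[[y]] dx) *)
Definition lconn_u (D : LL -> LL) : Prop :=
  (forall x, Lvalid x -> Lvalid (D x)) /\
  (forall c x y, Lvalid x -> Lvalid y ->
     D (Ladd x y) = Ladd (D x) (D y) /\ D (Lmul (Lcst c) x) = Lmul (Lcst c) (D x)) /\
  (forall f s, Lvalid f -> Lvalid s ->
     D (Lmul f s) = Ladd (Lmul f (D s)) (Lmul Llam (Lmul s (Lder f)))).

(* lambda-connections on the module K[[x, y]] with values in x^{-1}K[[x,y]] dx *)
Definition lconn_int (D : LL -> LL) : Prop :=
  (forall s, Lint s -> Lpole1 (D s)) /\
  (forall c x y, Lint x -> Lint y ->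
     D (Ladd x y) = Ladd (D x) (D y) /\ D (Lmul (Lcst c) x) = Lmul (Lcst c) (D x)) /\
  (forall f s, Lint f -> Lint s ->
     D (Lmul f s) = Ladd (Lmul f (D s)) (Lmul Llam (Lmul s (Lder f)))).

(* the reduction mod lambda of D equals (multiplication by) the form m dx *)
Definition red_is (m : lser) (D : LL -> LL) (dom : LL -> Prop) : Prop :=
  forall s, dom s -> D s 0%N = lmul m (s 0%N).

(* residue of D equals -lambda/2 (as endomorphism of l / x l) *)
Definition res_half (D : LL -> LL) : Prop :=
  forall s, Lint s -> forall i : nat,
    D s i (-1) = match i with 0%N => 0 | j.+1 => - (2%:R)^-1 * s j 0 end.

(* objects of \tilde{Conn}: (l, delta) with l = K[[x, y]] *)
Definition Conn_obj (m : lser) (D : LL -> LL) : Prop :=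
  lconn_int D /\ res_half D /\ red_is m D Lint.

(* objects of \tilde{CC}: (l_u, delta, l_0) with l_u = K((x))[[y]] *)
Definition CC_obj (m : lser) (D : LL -> LL) (l0 : lser -> Prop) : Prop :=
  lconn_u D /\ red_is m D Lvalid /\ lattice l0.

Definition CC_iso (f : LL -> LL) (D1 : LL -> LL) (S1 : lser -> Prop)
                  (D2 : LL -> LL) (S2 : lser -> Prop) : Prop :=
  Liso f /\ (forall x, Lvalid x -> f (D1 x) = D2 (f x)) /\
  (forall h, S2 h <-> exists h0, S1 h0 /\ f (Lc0 h0) 0%N = h).

Definition base_change (D D' : LL -> LL) : Prop :=
  lconn_u D' /\ forall s, Lint s -> D' s = D s.

Record fiber_obj (m : lser) (D : LL -> LL) (l0 : lser -> Prop) := FiberObj {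
  fo_conn : LL -> LL;
  fo_conn_u : LL -> LL;
  fo_iso : LL -> LL;
  fo_conn_ok : Conn_obj m fo_conn;
  fo_bc : base_change fo_conn fo_conn_u;
  fo_iso_ok : CC_iso fo_iso fo_conn_u lpow D l0
}.

(* morphisms (l, delta1, f1) -> (l, delta2, f2) in the essential fiber:
   isomorphisms g of (l,delta) in \tilde{Conn} with f2 o F(g) = f1 *)
Definition fiber_hom m D l0 (o1 o2 : fiber_obj m D l0) (g : LL -> LL) : Prop :=
  (forall s, Lint s -> Lint (g s)) /\
  (forall s', Lint s' -> exists s, Lint s /\ g s = s') /\
  (forall s1 s2, Lint s1 -> Lint s2 -> g s1 = g s2 -> s1 = s2) /\
  (forall f s1 s2, Lint f -> Lint s1 -> Lint s2 ->
      g (Ladd s1 s2) = Ladd (g s1) (g s2) /\ g (Lmul f s1) = Lmul f (g s1)) /\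
  (* G = g (x) id : the base change F(g) of g *)
  exists G, Llin G /\ (forall s, Lint s -> G s = g s) /\
    (forall s, Lint s -> G (fo_conn o1 s) = fo_conn o2 (g s)) /\
    (forall x, Lvalid x -> fo_iso o2 (G x) = fo_iso o1 x).

End Series.
Arguments Llam {K}.
Arguments pX {K}.
Arguments pone {K}.

Section Spectral.
Variable K : fieldType.
Definition disc (t d : pser K) : pser K :=
  padd (pmul t t) (pscale (- 4%:R) d).
(* mu = xi dz restricted to \tilde X, written m(\tilde z) d\tilde z, where
   z = Z(\tilde z) and xi = (t(Z) + \tilde z)/2 *)
Definition mu_coef (t Z : pser K) : lser K :=
  ps_lift (pmul (pscale (2%:R)^-1 (padd (ps_comp t Z) pX)) (pder Z)).
End Spectral.

(* Trivialising [l_u] by [iota] turns [delta] into [lambda d + a] on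
   [K((x))[[lambda]]], where [x] is the coordinate [\tilde z].  An object of the
   fiber amounts to an invertible [v] with [v(0) K[[x]] = l_0] such that
   [b = a + lambda v' / v] has at most a simple pole, reduces to [mu] modulo
   [lambda] and has residue [-lambda/2]; then [delta] is [lambda d + b] on the
   lattice [K[[x, lambda]]].
   Uniqueness: for two such [v1], [v2] the quotient [U = v1 / v2] satisfies
   [lambda U' = (b1 - b2) U], where [b1 - b2] is [lambda] times a regular series;
   since [U(0)] and [1 / U(0)] are regular, induction on the [lambda]-degree shows
   that [U] is regular, and multiplication by [U] is the only morphism.
   Non-emptiness: [v' / v] is residue-free in every [lambda]-degree and regular in
   degree 0, so the conditions on [a] are necessary; conversely, under them each
   [a_i] with [i >= 2] is regular up to a derivative [P_i'], and the formal
   exponential [v = exp (- sum_i P_(i+1) lambda^i)] gauges [a] into an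
   admissible [b]. *)

From HB Require Import structures.
From mathcomp Require Import all_boot all_order all_algebra.
From mathcomp Require Import boolp reals complex.
From mathcomp Require Import ring zify.
Import Order.TTheory GRing.Theory Num.Theory.
Local Open Scope ring_scope.

Set Implicit Arguments. Unset Strict Implicit. Unset Printing Implicit Defensive.

Section LaurentCoefficients.
Variable K : fieldType.
Implicit Types (f g h : lser K) (A B n : int).

Definition vanish_below A f := forall n : int, n < A -> f n = 0.

Lemma lval_vanish f : laurent f -> vanish_below (lval f) f.
Proof. by move=> lf; rewrite /lval; case: pselect => // lf'; exact: svalP (cid lf'). Qed.

Lemma vanish_below_le A A' f : vanish_below A f -> A' <= A -> vanish_below A' f.
Proof. by move=> vf hA n hn; apply: vf; lia. Qed.

Lemma int_cases (m : int) : (exists p : nat, m = p%:Z) \/ m = -1 \/ m < -1.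
Proof.
case: m => p; first by left; exists p.
by right; case: p => [|p]; [left | right; rewrite NegzE; lia].
Qed.

Definition lconv A B f g (n : int) : K :=
  if n - A - B < 0 then 0
  else \sum_(k < (absz (n - A - B)%R).+1) f (A + k%:Z) * g (n - A - k%:Z).

Lemma lconv_nat A B f g n (p : nat) : n - A - B = p%:Z ->
  lconv A B f g n = \sum_(k < p.+1) f (A + k%:Z) * g (n - A - k%:Z).
Proof. by move=> e; rewrite /lconv e ltNge lez_nat. Qed.

Lemma lconv_neg A B f g n : n - A - B < 0 -> lconv A B f g n = 0.
Proof. by rewrite /lconv => ->. Qed.

Lemma lconv_predl A B f g n : f (A - 1) = 0 -> lconv (A - 1) B f g n = lconv A B f g n.
Proof.
move=> f0; case: (int_cases (n - A - B)) => [[p e]|[e|e]].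
- have e' : n - (A - 1) - B = p.+1%:Z by lia.
  rewrite (lconv_nat _ _ e) (lconv_nat _ _ e') big_ord_recl /= addr0 f0 mul0r add0r.
  by apply: eq_bigr => k _; rewrite /bump /=; congr (f _ * g _); lia.
- have e' : n - (A - 1) - B = 0%:Z by lia.
  by rewrite (lconv_nat _ _ e') lconv_neg ?big_ord1 /= ?addr0 ?f0 ?mul0r //; lia.
- by rewrite !lconv_neg //; lia.
Qed.

Lemma lconv_predr A B f g n : g (B - 1) = 0 -> lconv A (B - 1) f g n = lconv A B f g n.
Proof.
move=> g0; case: (int_cases (n - A - B)) => [[p e]|[e|e]].
- have e' : n - A - (B - 1) = p.+1%:Z by lia.
  rewrite (lconv_nat _ _ e) (lconv_nat _ _ e') big_ord_recr /=.
  have -> : n - A - p.+1%:Z = B - 1 by lia.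
  by rewrite g0 mulr0 addr0.
- have e' : n - A - (B - 1) = 0%:Z by lia.
  rewrite (lconv_nat _ _ e') lconv_neg ?big_ord1 /=; last by lia.
  have -> : n - A - 0%:Z = B - 1 by lia.
  by rewrite g0 mulr0.
- by rewrite !lconv_neg //; lia.
Qed.

Lemma lconv_lower A B A' B' f g n : vanish_below A f -> vanish_below B g ->
  A' <= A -> B' <= B -> lconv A' B' f g n = lconv A B f g n.
Proof.
move=> vf vg hA hB.
have lowerl i C : lconv (A - i%:Z) C f g n = lconv A C f g n.
  elim: i => [|i IH]; first by rewrite subr0.
  rewrite -IH -(lconv_predl (A := A - i%:Z)); first by congr lconv; lia.
  by apply: vf; lia.
have lowerr i : lconv A (B - i%:Z) f g n = lconv A B f g n.
  elim: i => [|i IH]; first by rewrite subr0.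
  rewrite -IH -(@lconv_predr A (B - i%:Z)); first by congr lconv; lia.
  by apply: vg; lia.
have -> : A' = A - (absz (A - A'))%:Z by lia.
have -> : B' = B - (absz (B - B'))%:Z by lia.
by rewrite lowerl lowerr.
Qed.

(* The definition of [lmul] uses the chosen bound [lval]; any other pair of
   lower bounds computes the same product. *)
Lemma lmul_lconv A B f g n : laurent f -> laurent g ->
  vanish_below A f -> vanish_below B g -> lmul f g n = lconv A B f g n.
Proof.
move=> lf lg vf vg; rewrite /lmul -/(lconv _ _ f g n).
rewrite -(@lconv_lower _ _ (Num.min A (lval f)) (Num.min B (lval g))) ?ge_min ?lexx ?orbT //;
  try exact: lval_vanish.
by rewrite (@lconv_lower A B) // ge_min lexx.
Qed.

Definition ptrunc A (n : nat) f : {poly K} := \poly_(k < n) f (A + k%:Z).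

Lemma coef_ptrunc A m f k : (k <= m)%N -> (ptrunc A m.+1 f)`_k = f (A + k%:Z).
Proof. by move=> h; rewrite coef_poly ltnS h. Qed.

Lemma lmul_coefM A B f g n m (p q : {poly K}) : laurent f -> laurent g ->
  vanish_below A f -> vanish_below B g -> n - A - B = m%:Z ->
  (forall k, (k <= m)%N -> p`_k = f (A + k%:Z)) ->
  (forall k, (k <= m)%N -> q`_k = g (B + k%:Z)) ->
  lmul f g n = (p * q)`_m.
Proof.
move=> lf lg vf vg e hp hq; rewrite (lmul_lconv _ lf lg vf vg) (lconv_nat _ _ e) coefM.
apply: eq_bigr => k _; have hk : (k <= m)%N by rewrite -ltnS.
by rewrite hp // hq ?leq_subr //; congr (_ * g _); lia.
Qed.

Lemma lmul_vanish A B f g : laurent f -> laurent g ->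
  vanish_below A f -> vanish_below B g -> vanish_below (A + B) (lmul f g).
Proof. by move=> lf lg vf vg n hn; rewrite (lmul_lconv _ lf lg vf vg) lconv_neg //; lia. Qed.

Lemma laurent_lmul f g : laurent f -> laurent g -> laurent (lmul f g).
Proof.
by move=> lf lg; exists (lval f + lval g); apply: lmul_vanish => //; apply: lval_vanish.
Qed.

Lemma ladd_vanish A f g : vanish_below A f -> vanish_below A g -> vanish_below A (ladd f g).
Proof. by move=> vf vg n hn; rewrite /ladd vf ?vg ?addr0. Qed.

Lemma laurent_ladd f g : laurent f -> laurent g -> laurent (ladd f g).
Proof.
move=> [A vf] [B vg]; exists (Num.min A B).
by apply: ladd_vanish; [apply: vanish_below_le vf _ | apply: vanish_below_le vg _];
  rewrite ge_min lexx ?orbT.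
Qed.

Lemma lmulC f g : laurent f -> laurent g -> lmul f g = lmul g f.
Proof.
move=> lf lg; apply/funext => n.
have vf := lval_vanish lf; have vg := lval_vanish lg.
set A := lval f in vf *; set B := lval g in vg *.
case: (int_cases (n - A - B)) => [[m e]|e].
- have e' : n - B - A = m%:Z by lia.
  have hf := @coef_ptrunc A m f; have hg := @coef_ptrunc B m g.
  by rewrite (lmul_coefM lf lg vf vg e hf hg) (lmul_coefM lg lf vg vf e' hg hf) mulrC.
- by rewrite (lmul_vanish lf lg vf vg) ?(lmul_vanish lg lf vg vf) //; lia.
Qed.

Lemma lmulA f g h : laurent f -> laurent g -> laurent h ->
  lmul f (lmul g h) = lmul (lmul f g) h.
Proof.
move=> lf lg lh; apply/funext => n.
have vf := lval_vanish lf; have vg := lval_vanish lg; have vh := lval_vanish lh.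
set A := lval f in vf *; set B := lval g in vg *; set C := lval h in vh *.
have lfg := laurent_lmul lf lg; have lgh := laurent_lmul lg lh.
have vfg := lmul_vanish lf lg vf vg; have vgh := lmul_vanish lg lh vg vh.
case: (int_cases (n - A - B - C)) => [[m e]|e]; last first.
  by rewrite (lmul_vanish lf lgh vf vgh) ?(lmul_vanish lfg lh vfg vh) //; lia.
have trunc_lmul P Q p q : laurent p -> laurent q -> vanish_below P p ->
    vanish_below Q q -> forall k, (k <= m)%N ->
    (ptrunc P m.+1 p * ptrunc Q m.+1 q)`_k = lmul p q (P + Q + k%:Z).
  move=> lp lq vp vq k hk; symmetry.
  apply: (lmul_coefM lp lq vp vq) => [|j hj|j hj]; [lia | |];
    by rewrite coef_ptrunc //; apply: leq_trans hk.
have e1 : n - A - (B + C) = m%:Z by lia.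
have e2 : n - (A + B) - C = m%:Z by lia.
have hf := @coef_ptrunc A m f; have hh := @coef_ptrunc C m h.
have hgh := trunc_lmul _ _ _ _ lg lh vg vh; have hfg := trunc_lmul _ _ _ _ lf lg vf vg.
by rewrite (lmul_coefM lf lgh vf vgh e1 hf hgh) (lmul_coefM lfg lh vfg vh e2 hfg hh) mulrA.
Qed.

Lemma lmulDr f g h : laurent f -> laurent g -> laurent h ->
  lmul f (ladd g h) = ladd (lmul f g) (lmul f h).
Proof.
move=> lf lg lh; apply/funext => n.
have vf := lval_vanish lf; set A := lval f in vf *.
pose B := Num.min (lval g) (lval h).
have vg : vanish_below B g by apply: vanish_below_le (lval_vanish lg) _; rewrite ge_min lexx.
have vh : vanish_below B h.
  by apply: vanish_below_le (lval_vanish lh) _; rewrite ge_min lexx orbT.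
have lgh := laurent_ladd lg lh; have vgh := ladd_vanish vg vh.
rewrite /ladd; case: (int_cases (n - A - B)) => [[m e]|e].
- have hf := @coef_ptrunc A m f; have hg := @coef_ptrunc B m g.
  have hh := @coef_ptrunc B m h.
  have hgh k : (k <= m)%N -> (ptrunc B m.+1 g + ptrunc B m.+1 h)`_k = ladd g h (B + k%:Z).
    by move=> hk; rewrite coefD hg ?hh.
  by rewrite (lmul_coefM lf lgh vf vgh e hf hgh) (lmul_coefM lf lg vf vg e hf hg)
    (lmul_coefM lf lh vf vh e hf hh) mulrDr coefD.
- by rewrite !(lmul_vanish _ _ vf vg, lmul_vanish _ _ vf vh, lmul_vanish _ _ vf vgh)
    ?addr0 //; lia.
Qed.

Definition lone : lser K := fun n => (n == 0)%:R.

Lemma lone_vanish : vanish_below 0 lone.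
Proof. by move=> n hn; rewrite /lone; case: eqP hn => // ->. Qed.

Lemma laurent_lone : laurent lone.
Proof. by exists 0; exact: lone_vanish. Qed.

Lemma lmul1 f : laurent f -> lmul lone f = f.
Proof.
move=> lf; apply/funext => n.
have vf := lval_vanish lf; set B := lval f in vf *.
case: (int_cases (n - 0 - B)) => [[m e]|e].
- rewrite (lmul_coefM (p := 1) (q := ptrunc B m.+1 f) laurent_lone lf lone_vanish vf e).
  + by rewrite mul1r coef_ptrunc //; congr f; lia.
  + by move=> k hk; rewrite coef1 /lone add0r eqz_nat.
  + by move=> k hk; rewrite coef_ptrunc.
- by rewrite (lmul_vanish laurent_lone lf lone_vanish vf) ?vf //; lia.
Qed.

Lemma lder_vanish A f : vanish_below A f -> vanish_below (A - 1) (lder f).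
Proof. by move=> vf n hn; rewrite /lder vf ?mul0rz //; lia. Qed.

Lemma laurent_lder f : laurent f -> laurent (lder f).
Proof. by move=> [A vf]; exists (A - 1); exact: lder_vanish. Qed.

Lemma lderM f g : laurent f -> laurent g ->
  lder (lmul f g) = ladd (lmul (lder f) g) (lmul f (lder g)).
Proof.
move=> lf lg; apply/funext => n.
have vf := lval_vanish lf; set A := lval f in vf *.
have vg := lval_vanish lg; set B := lval g in vg *.
have lf' := laurent_lder lf; have lg' := laurent_lder lg.
rewrite /lder /ladd (lmul_lconv _ lf lg vf vg) (lmul_lconv _ lf' lg (lder_vanish vf) vg)
  (lmul_lconv _ lf lg' vf (lder_vanish vg)).
case: (int_cases (n + 1 - A - B)) => [[m e]|e].
- have e1 : n - (A - 1) - B = m%:Z by lia.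
  have e2 : n - A - (B - 1) = m%:Z by lia.
  rewrite (lconv_nat _ _ e) (lconv_nat _ _ e1) (lconv_nat _ _ e2) -big_split /= mulrz_suml.
  apply: eq_bigr => k _; rewrite /lder.
  have -> : A - 1 + k%:Z + 1 = A + k%:Z by lia.
  have -> : n - (A - 1) - k%:Z = n + 1 - A - k%:Z by lia.
  have -> : n - A - k%:Z + 1 = n + 1 - A - k%:Z by lia.
  by rewrite mulrzAl mulrzAr -mulrzDr; congr (_ *~ _); lia.
- by rewrite !lconv_neg ?mul0rz ?addr0 //; lia.
Qed.

End LaurentCoefficients.

Section LaurentRing.
Variable K : fieldType.
Implicit Types f : lser K.

Definition laur := {f : lser K | laurent f}.
HB.instance Definition _ := gen_eqMixin laur.
HB.instance Definition _ := gen_choiceMixin laur.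

Definition lcoef (x : laur) : lser K := sval x.

Lemma lcoefP (x : laur) : laurent (lcoef x). Proof. exact: svalP x. Qed.

Lemma lcoef_inj : injective lcoef.
Proof. by move=> [f lf] [g lg] /= e; subst g; congr exist; exact: Prop_irrelevance. Qed.

Lemma laurent0 : laurent (fun _ => 0 : K). Proof. by exists 0. Qed.

Lemma laurent_scale (c : K) f : laurent f -> laurent (fun n => c * f n).
Proof. by move=> [A vf]; exists A => n hn; rewrite vf ?mulr0. Qed.

Definition laur0 : laur := exist _ _ laurent0.
Definition laur_opp (x : laur) : laur := exist _ _ (laurent_scale (-1) (lcoefP x)).
Definition laur_add (x y : laur) : laur := exist _ _ (laurent_ladd (lcoefP x) (lcoefP y)).
Definition laur1 : laur := exist _ _ (@laurent_lone K).
Definition laur_mul (x y : laur) : laur := exist _ _ (laurent_lmul (lcoefP x) (lcoefP y)).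

Lemma laur_addA : associative laur_add.
Proof. by move=> x y z; apply: lcoef_inj; apply/funext => n; rewrite /= /ladd addrA. Qed.
Lemma laur_addC : commutative laur_add.
Proof. by move=> x y; apply: lcoef_inj; apply/funext => n; rewrite /= /ladd addrC. Qed.
Lemma laur_add0 : left_id laur0 laur_add.
Proof. by move=> x; apply: lcoef_inj; apply/funext => n; rewrite /= /ladd add0r. Qed.
Lemma laur_addN : left_inverse laur0 laur_opp laur_add.
Proof.
by move=> x; apply: lcoef_inj; apply/funext => n; rewrite /= /ladd mulN1r addNr.
Qed.

HB.instance Definition _ := GRing.isZmodule.Build laur laur_addA laur_addC laur_add0 laur_addN.

Lemma laur_mulA : associative laur_mul.
Proof. by move=> x y z; apply: lcoef_inj; rewrite /= lmulA //; apply: lcoefP. Qed.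
Lemma laur_mulC : commutative laur_mul.
Proof. by move=> x y; apply: lcoef_inj; rewrite /= lmulC //; apply: lcoefP. Qed.
Lemma laur_mul1 : left_id laur1 laur_mul.
Proof. by move=> x; apply: lcoef_inj; rewrite /= lmul1 //; apply: lcoefP. Qed.
Lemma laur_mulDl : left_distributive laur_mul laur_add.
Proof.
move=> x y z; apply: lcoef_inj; have lx := lcoefP x; have ly := lcoefP y; have lz := lcoefP z.
by rewrite /= (lmulC (laurent_ladd lx ly) lz) lmulDr // (lmulC lz lx) (lmulC lz ly).
Qed.
Lemma laur1_neq0 : laur1 != laur0.
Proof. by apply/eqP => /(congr1 (lcoef^~ 0)); rewrite /= /lone eqxx => /eqP; rewrite oner_eq0. Qed.

HB.instance Definition _ :=
  GRing.Zmodule_isComNzRing.Build laur laur_mulA laur_mulC laur_mul1 laur_mulDl laur1_neq0.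

Lemma lcoefD (x y : laur) n : lcoef (x + y) n = lcoef x n + lcoef y n. Proof. by []. Qed.
Lemma lcoefN (x : laur) n : lcoef (- x) n = - lcoef x n.
Proof. exact: mulN1r. Qed.
Lemma lcoefB (x y : laur) n : lcoef (x - y) n = lcoef x n - lcoef y n.
Proof. by rewrite lcoefD lcoefN. Qed.
Lemma lcoefM (x y : laur) : lcoef (x * y) = lmul (lcoef x) (lcoef y). Proof. by []. Qed.
Lemma lcoef1 : lcoef 1 = lone K. Proof. by []. Qed.

Lemma lcoef_sum I (r : seq I) (P : pred I) (F : I -> laur) n :
  lcoef (\sum_(i <- r | P i) F i) n = \sum_(i <- r | P i) lcoef (F i) n.
Proof. exact: (big_morph (lcoef^~ n) (fun x y => lcoefD x y n)). Qed.

Lemma lcoefMn (x : laur) k n : lcoef (x *+ k) n = lcoef x n *+ k.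
Proof. by elim: k => [|k IH]; rewrite ?mulr0n // !mulrS lcoefD IH. Qed.

Lemma laurent_const (c : K) : laurent (fun n : int => if n == 0 then c else 0).
Proof. by exists 0 => n; case: eqP => // ->. Qed.

Definition lconst (c : K) : laur := exist _ _ (laurent_const c).

Definition lscale (c : K) (x : laur) : laur := exist _ _ (laurent_scale c (lcoefP x)).

End LaurentRing.

Section LambdaSeries.
Variable K : fieldType.
Local Notation laur := (laur K).

Record lps := LPS { lc : nat -> laur }.
HB.instance Definition _ := gen_eqMixin lps.
HB.instance Definition _ := gen_choiceMixin lps.

Lemma lps_eq (u v : lps) : (forall i, lc u i = lc v i) -> u = v.
Proof. by case: u => u; case: v => v /= h; congr LPS; apply/funext. Qed.

Definition lps0 : lps := LPS (fun _ => 0).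
Definition lps_opp (u : lps) : lps := LPS (fun i => - lc u i).
Definition lps_add (u v : lps) : lps := LPS (fun i => lc u i + lc v i).
Definition lps1 : lps := LPS (fun i => (i == 0)%:R).
Definition lps_mul (u v : lps) : lps :=
  LPS (fun i => \sum_(j < i.+1) lc u j * lc v (i - j)).

Lemma lps_addA : associative lps_add.
Proof. by move=> u v w; apply: lps_eq => i /=; rewrite addrA. Qed.
Lemma lps_addC : commutative lps_add.
Proof. by move=> u v; apply: lps_eq => i /=; rewrite addrC. Qed.
Lemma lps_add0 : left_id lps0 lps_add.
Proof. by move=> u; apply: lps_eq => i /=; rewrite add0r. Qed.
Lemma lps_addN : left_inverse lps0 lps_opp lps_add.
Proof. by move=> u; apply: lps_eq => i /=; rewrite addNr. Qed.

HB.instance Definition _ := GRing.isZmodule.Build lps lps_addA lps_addC lps_add0 lps_addN.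

Definition lps_trunc (i : nat) (u : lps) : {poly laur} := \poly_(j < i.+1) lc u j.

Lemma coef_lps_trunc i u k : (k <= i)%N -> (lps_trunc i u)`_k = lc u k.
Proof. by move=> h; rewrite coef_poly ltnS h. Qed.

Lemma lc_mul_coefM u v i (p q : {poly laur}) :
  (forall k, (k <= i)%N -> p`_k = lc u k) -> (forall k, (k <= i)%N -> q`_k = lc v k) ->
  lc (lps_mul u v) i = (p * q)`_i.
Proof.
move=> hp hq; rewrite coefM /=; apply: eq_bigr => k _.
have hk : (k <= i)%N by rewrite -ltnS.
by rewrite hp // hq // leq_subr.
Qed.

Lemma lps_mulA : associative lps_mul.
Proof.
move=> u v w; apply: lps_eq => i.
have trunc_mul x y k : (k <= i)%N -> (lps_trunc i x * lps_trunc i y)`_k = lc (lps_mul x y) k.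
  move=> hk; symmetry.
  by apply: lc_mul_coefM => j hj; rewrite coef_lps_trunc //; exact: leq_trans hk.
have tr := @coef_lps_trunc i.
by rewrite (lc_mul_coefM (tr u) (trunc_mul v w)) (lc_mul_coefM (trunc_mul u v) (tr w)) mulrA.
Qed.

Lemma lps_mulC : commutative lps_mul.
Proof.
move=> u v; apply: lps_eq => i; have tr := @coef_lps_trunc i.
by rewrite (lc_mul_coefM (tr u) (tr v)) (lc_mul_coefM (tr v) (tr u)) mulrC.
Qed.

Lemma lps_mul1 : left_id lps1 lps_mul.
Proof.
move=> u; apply: lps_eq => i.
rewrite (lc_mul_coefM (p := 1) (q := lps_trunc i u)) ?mul1r ?coef_lps_trunc //.
- by move=> k hk; rewrite coef1.
- by move=> k hk; rewrite coef_lps_trunc.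
Qed.

Lemma lps_mulDl : left_distributive lps_mul lps_add.
Proof.
by move=> u v w; apply: lps_eq => i /=; rewrite -big_split; apply: eq_bigr => k _; rewrite mulrDl.
Qed.

Lemma lps1_neq0 : lps1 != lps0.
Proof. by apply/eqP => /(congr1 (lc^~ 0%N)) /= /eqP; rewrite oner_eq0. Qed.

HB.instance Definition _ :=
  GRing.Zmodule_isComNzRing.Build lps lps_mulA lps_mulC lps_mul1 lps_mulDl lps1_neq0.

Lemma lcD u v i : lc (u + v) i = lc u i + lc v i. Proof. by []. Qed.
Lemma lcB u v i : lc (u - v) i = lc u i - lc v i. Proof. by []. Qed.
Lemma lc1 i : lc 1 i = (i == 0)%:R. Proof. by []. Qed.
Lemma lcM u v i : lc (u * v) i = \sum_(j < i.+1) lc u j * lc v (i - j). Proof. by []. Qed.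
Lemma lcM0 u v : lc (u * v) 0 = lc u 0 * lc v 0. Proof. by rewrite lcM big_ord1. Qed.

End LambdaSeries.

Section Derivations.
Variable K : fieldType.
Local Notation laur := (laur K).
Local Notation lps := (lps K).
Implicit Types (x y : laur) (u v : lps).

Definition lderiv x : laur := exist _ _ (laurent_lder (lcoefP x)).

Lemma lcoef_lderiv x n : lcoef (lderiv x) n = lcoef x (n + 1) *~ (n + 1).
Proof. by []. Qed.

Lemma lderivB : zmod_morphism lderiv.
Proof.
move=> x y; apply: lcoef_inj; apply/funext => n.
by rewrite lcoefB !lcoef_lderiv lcoefB mulrzBl.
Qed.

HB.instance Definition _ := GRing.isZmodMorphism.Build laur laur lderiv lderivB.

Lemma lderivM x y : lderiv (x * y) = lderiv x * y + x * lderiv y.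
Proof. by apply: lcoef_inj; rewrite /= lderM //; apply: lcoefP. Qed.

Lemma lderiv_const c : lderiv (lconst c) = 0.
Proof.
apply: lcoef_inj; apply/funext => n; rewrite /= /lder.
by case: (n + 1 =P 0) => [->|_]; rewrite ?mulr0z ?mul0rz.
Qed.

Lemma lderiv1 : lderiv 1 = 0.
Proof.
apply: lcoef_inj; apply/funext => n; rewrite lcoef_lderiv /= /lone.
by case: (n + 1 =P 0) => [->|_]; rewrite ?mulr0z ?mul0rz.
Qed.

Definition psderiv u : lps := LPS (fun i => lderiv (lc u i)).

Lemma psderivB : zmod_morphism psderiv.
Proof. by move=> u v; apply: lps_eq => i; rewrite /= raddfB. Qed.

HB.instance Definition _ := GRing.isZmodMorphism.Build lps lps psderiv psderivB.

Lemma psderivM u v : psderiv (u * v) = psderiv u * v + u * psderiv v.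
Proof.
apply: lps_eq => i; rewrite /= raddf_sum -big_split /=.
by apply: eq_bigr => j _; rewrite lderivM.
Qed.

Definition euler u : lps := LPS (fun i => lc u i *+ i).

Lemma eulerB : zmod_morphism euler.
Proof. by move=> u v; apply: lps_eq => i; rewrite /= mulrnBl. Qed.

HB.instance Definition _ := GRing.isZmodMorphism.Build lps lps euler eulerB.

Lemma eulerM u v : euler (u * v) = euler u * v + u * euler v.
Proof.
apply: lps_eq => i; rewrite /= -big_split /= -sumrMnl; apply: eq_bigr => j _.
by rewrite mulrnAl mulrnAr -mulrnDr subnKC // -ltnS.
Qed.

Lemma euler_psderiv u : euler (psderiv u) = psderiv (euler u).
Proof. by apply: lps_eq => i; rewrite /= raddfMn. Qed.

Definition lam : lps := LPS (fun i => (i == 1)%:R).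

Lemma lc_lamM u i : lc (lam * u) i = if i is j.+1 then lc u j else 0.
Proof.
rewrite lcM; case: i => [|i]; first by rewrite big_ord1 /= mul0r.
rewrite big_ord_recl /= mul0r add0r big_ord_recl /= mul1r subn1 big1 ?addr0 // => j _.
by rewrite /= mul0r.
Qed.

Lemma lam_lreg : GRing.lreg lam.
Proof.
move=> u v e; apply: lps_eq => i.
by have := congr1 (fun w => lc w i.+1) e; rewrite !lc_lamM.
Qed.

Definition lps_const (c : pser K) : lps := LPS (fun i => lconst (c i)).

Lemma psderiv_const c : psderiv (lps_const c) = 0.
Proof. by apply: lps_eq => i; rewrite /= lderiv_const. Qed.

Definition lpsC x : lps := LPS (fun i => if i == 0%N then x else 0).

Lemma lpsCM x y : lpsC (x * y) = lpsC x * lpsC y.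
Proof.
apply: lps_eq => -[|i]; rewrite lcM /= ?big_ord1 //.
by rewrite big_ord_recl /= mulr0 add0r big1 // => j _; rewrite /= mul0r.
Qed.

Lemma lpsC1 : lpsC 1 = 1.
Proof. by apply: lps_eq => -[]. Qed.

Lemma psderivC x : psderiv (lpsC x) = lpsC (lderiv x).
Proof. by apply: lps_eq => -[|i] /=; rewrite ?raddf0. Qed.

End Derivations.
Arguments lam {K}.

Section SeriesOfCoefficients.
Variable K : fieldType.
Local Notation laur := (laur K).
Local Notation lps := (lps K).
Implicit Types (u v : lps) (a : LL K).

Definition ll_of u : LL K := fun i => lcoef (lc u i).

Definition lps_of a : lps := LPS (fun i =>
  if pselect (laurent (a i)) is left la then exist _ (a i) la : laur else 0).

Lemma ll_of_valid u : Lvalid (ll_of u).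
Proof. by move=> i; apply: lcoefP. Qed.

Lemma ll_of_inj : injective ll_of.
Proof. by move=> u v e; apply: lps_eq => i; apply: lcoef_inj; exact: (congr1 (fun a => a i) e). Qed.

Lemma lps_ofK a : Lvalid a -> ll_of (lps_of a) = a.
Proof. by move=> va; apply/funext => i; rewrite /ll_of /=; case: pselect => // /(_ (va i)). Qed.

Lemma ll_ofK : cancel ll_of lps_of.
Proof. by move=> u; apply: ll_of_inj; rewrite lps_ofK //; apply: ll_of_valid. Qed.

Lemma Lvalid_ll_of a : Lvalid a -> exists u, a = ll_of u.
Proof. by move=> va; exists (lps_of a); rewrite lps_ofK. Qed.

Lemma Ladd_ll_of u v : Ladd (ll_of u) (ll_of v) = ll_of (u + v).
Proof. by []. Qed.

Lemma Lmul_ll_of u v : Lmul (ll_of u) (ll_of v) = ll_of (u * v).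
Proof.
apply/funext => i; apply/funext => n; rewrite /Lmul /ll_of lcM lcoef_sum.
by apply: eq_bigr => j _; rewrite lcoefM.
Qed.

Lemma Lder_ll_of u : Lder (ll_of u) = ll_of (psderiv u). Proof. by []. Qed.

Lemma Llam_ll_of : Llam = ll_of lam.
Proof.
apply/funext => i; apply/funext => n; rewrite /Llam /ll_of /= lcoefMn lcoef1 /lone.
by case: (i == 1)%N; case: (n == 0).
Qed.

Lemma Lcst_ll_of c : Lcst c = ll_of (lps_const c). Proof. by []. Qed.

Lemma Lc0_ll_of x : Lc0 (lcoef x) = ll_of (lpsC x).
Proof. by apply/funext => i; rewrite /Lc0 /ll_of /=; case: (i == 0)%N. Qed.

Lemma lam_psderiv_ll_of u v :
  Ladd (Lmul Llam (Lder (ll_of u))) (Lmul (ll_of u) (ll_of v)) = ll_of (lam * psderiv u + u * v).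
Proof. by rewrite Llam_ll_of Lder_ll_of !Lmul_ll_of Ladd_ll_of. Qed.

End SeriesOfCoefficients.

Section RegularAndResidue.
Variable K : fieldType.
Local Notation laur := (laur K).
Local Notation lps := (lps K).
Implicit Types (x y : laur) (u : lps).

Definition regular x := lpow (lcoef x).
Definition pole1 x := lpole1 (lcoef x).
Definition lres x := lcoef x (-1).

Lemma regular0 : regular 0. Proof. by []. Qed.

Lemma regular1 : regular 1.
Proof. by move=> n hn; rewrite lcoef1 /lone; case: eqP hn => // ->. Qed.

Lemma regularD x y : regular x -> regular y -> regular (x + y).
Proof. by move=> rx ry n hn; rewrite lcoefD rx ?ry ?addr0. Qed.

Lemma regularM x y : regular x -> regular y -> regular (x * y).
Proof. by move=> rx ry; have := lmul_vanish (lcoefP x) (lcoefP y) rx ry; rewrite addr0. Qed.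

Lemma regularMn x k : regular x -> regular (x *+ k).
Proof. by move=> rx n hn; rewrite lcoefMn rx ?mul0rn. Qed.

Lemma regular_sum I (r : seq I) (P : pred I) (F : I -> laur) :
  (forall i, P i -> regular (F i)) -> regular (\sum_(i <- r | P i) F i).
Proof. by move=> rF; apply: big_ind => //; apply: regularD. Qed.

Lemma regular_lderiv x : regular x -> regular (lderiv x).
Proof.
move=> rx n hn; rewrite lcoef_lderiv.
by case: (n + 1 =P 0) => [->|n1]; rewrite ?mulr0z // rx ?mul0rz //; lia.
Qed.

Lemma regular_pole1 x : regular x -> pole1 x.
Proof. by move=> rx n hn; apply: rx; lia. Qed.

Lemma pole1D x y : pole1 x -> pole1 y -> pole1 (x + y).
Proof. by move=> px py n hn; rewrite lcoefD px ?py ?addr0. Qed.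

Lemma pole1N x : pole1 x -> pole1 (- x).
Proof. by move=> px n hn; rewrite lcoefN px ?oppr0. Qed.

Lemma pole1M x y : regular x -> pole1 y -> pole1 (x * y).
Proof. by move=> rx py; have := lmul_vanish (lcoefP x) (lcoefP y) rx py; rewrite add0r. Qed.

Lemma pole1_sum I (r : seq I) (P : pred I) (F : I -> laur) :
  (forall i, P i -> pole1 (F i)) -> pole1 (\sum_(i <- r | P i) F i).
Proof. by move=> pF; apply: big_ind => //; apply: pole1D. Qed.

Lemma pole1_lres0 x : pole1 x -> lres x = 0 -> regular x.
Proof. by move=> px r0 n hn; case: (n =P -1) => [->|n1] //; apply: px; lia. Qed.

Lemma lres_regular x : regular x -> lres x = 0.
Proof. exact. Qed.

Lemma lresD x y : lres (x + y) = lres x + lres y. Proof. exact: lcoefD. Qed.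

Lemma lresB x y : lres (x - y) = lres x - lres y. Proof. exact: lcoefB. Qed.

Lemma lres_sum I (r : seq I) (P : pred I) (F : I -> laur) :
  lres (\sum_(i <- r | P i) F i) = \sum_(i <- r | P i) lres (F i).
Proof. exact: lcoef_sum. Qed.

Lemma lres_lderiv x : lres (lderiv x) = 0.
Proof. by rewrite /lres lcoef_lderiv mulr0z. Qed.

Lemma lresM x y : regular x -> pole1 y -> lres (x * y) = lcoef x 0 * lres y.
Proof.
move=> rx py; rewrite /lres lcoefM (lmul_lconv _ (lcoefP x) (lcoefP y) rx py).
by rewrite (@lconv_nat _ 0 (-1) _ _ _ 0) // big_ord1.
Qed.

Definition lps_regular u := forall i, regular (lc u i).

Lemma lps_regular1 : lps_regular 1.
Proof. by move=> i; rewrite lc1; apply: regularMn; apply: regular1. Qed.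

Lemma lps_regularM u v : lps_regular u -> lps_regular v -> lps_regular (u * v).
Proof. by move=> ru rv i; rewrite lcM; apply: regular_sum => j _; apply: regularM. Qed.

Lemma lps_regular_lam_psderiv u : lps_regular u -> lps_regular (lam * psderiv u).
Proof. by move=> ru [|i]; rewrite lc_lamM //; apply: regular_lderiv. Qed.

End RegularAndResidue.
Arguments lps_regular1 {K}.

Section CharacteristicZero.
Variable K : fieldType.
Hypothesis K_char0 : has_pchar0 K.
Local Notation laur := (laur K).
Local Notation lps := (lps K).
Implicit Types (x y : laur) (u v w W : lps).

Let natf_eq0 n : (n%:R == 0 :> K) = (n == 0)%N. Proof. exact: (pcharf0P K).1. Qed.

Lemma char0_mulrn_eq0 (c : K) k : c *+ k.+1 = 0 -> c = 0.
Proof. by move/eqP; rewrite -mulr_natr mulf_eq0 natf_eq0 orbF => /eqP. Qed.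

Lemma laur_mulrn_eq0 x k : x *+ k.+1 = 0 -> x = 0.
Proof.
move=> e; apply: lcoef_inj; apply/funext => n; apply: (@char0_mulrn_eq0 _ k).
by rewrite -lcoefMn e.
Qed.

Lemma lscaleVn x k : lscale (k.+1%:R)^-1 x *+ k.+1 = x.
Proof.
apply: lcoef_inj; apply/funext => n.
by rewrite lcoefMn /= -mulrnAl -mulr_natr mulVf ?mul1r // natf_eq0.
Qed.

Lemma regular_of_lderiv x : regular (lderiv x) -> regular x.
Proof.
move=> rx' n hn; have := rx' (n - 1); rewrite lcoef_lderiv subrK => /(_ ltac:(lia)).
case: n hn => [m|m] hn; first by lia.
rewrite NegzE mulrNz => /eqP; rewrite oppr_eq0 -pmulrn => /eqP.
exact: char0_mulrn_eq0.
Qed.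


Lemma euler_eq0 W u : lc u 0 = 0 -> euler u = euler W * u -> u = 0.
Proof.
move=> u0 hE; apply: lps_eq => i; elim/ltn_ind: i => -[|k] IH //=.
apply: (@laur_mulrn_eq0 _ k); have := congr1 (fun v => lc v k.+1) hE.
rewrite /= big_ord_recl mulr0n mul0r add0r => ->.
by rewrite big1 // => j _; rewrite IH /= ?mulr0 // /bump /= subSS ltnS leq_subr.
Qed.

(* [psderiv] commutes with [euler], so [psderiv u - psderiv W * u] solves the
   same Euler equation as [u], with vanishing initial coefficient. *)
Lemma psderiv_euler W u : lc u 0 = 1 -> lc W 0 = 0 -> euler u = euler W * u ->
  psderiv u = psderiv W * u.
Proof.
move=> u0 W0 hE; apply/eqP; rewrite -subr_eq0; apply/eqP; apply: (euler_eq0 (W := W)).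
  by rewrite lcB lcM0 /= u0 W0 raddf0 lderiv1 mul0r subr0.
by rewrite raddfB /= eulerM !euler_psderiv hE psderivM; ring.
Qed.

Section Exponential.
Variable W : lps.

(* [exp_coefs n] lists the first [n + 1] coefficients of [exp W], obtained by
   solving [euler u = euler W * u] degree by degree. *)
Fixpoint exp_coefs (n : nat) : nat -> laur :=
  if n is n'.+1 then
    fun k => if k == n'.+1 then
      lscale (n'.+1%:R)^-1 (\sum_(j < n'.+1) lc (euler W) j.+1 * exp_coefs n' (n' - j))
    else exp_coefs n' k
  else fun k => (k == 0)%:R.

Lemma exp_coefs_stable n k : (k <= n)%N -> exp_coefs n k = exp_coefs k k.
Proof.
elim: n => [|n IH]; first by rewrite leqn0 => /eqP ->.
by rewrite leq_eqVlt => /orP[/eqP -> //|hk]; rewrite /= (ltn_eqF hk) IH.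
Qed.

Definition lexp : lps := LPS (fun k => exp_coefs k k).

Lemma lc_lexp0 : lc lexp 0 = 1. Proof. by []. Qed.

Lemma euler_lexp : euler lexp = euler W * lexp.
Proof.
apply: lps_eq => -[|n]; first by rewrite /= big_ord1 !mulr0n mul0r.
rewrite lcM big_ord_recl /= mulr0n mul0r add0r eqxx lscaleVn.
by apply: eq_bigr => j _; rewrite subSS exp_coefs_stable // leq_subr.
Qed.

End Exponential.

Lemma psderiv_lexp W : lc W 0 = 0 -> psderiv (lexp W) = psderiv W * lexp W.
Proof. by move=> W0; apply: psderiv_euler => //; apply: euler_lexp. Qed.

Lemma lexpN W : lexp W * lexp (- W) = 1.
Proof.
have euler0 : euler (lexp W * lexp (- W)) = 0 by rewrite eulerM !euler_lexp raddfN; ring.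
apply: lps_eq => -[|i]; first by rewrite lcM0 /= mulr1.
by apply: (@laur_mulrn_eq0 _ i); have /= -> := congr1 (fun v => lc v i.+1) euler0.
Qed.

Definition euler_prim u : lps :=
  LPS (fun i => if i is j.+1 then lscale (j.+1%:R)^-1 (lc u i) else 0).

Lemma euler_primK u : lc u 0 = 0 -> euler (euler_prim u) = u.
Proof. by move=> u0; apply: lps_eq => -[|i] /=; rewrite ?lscaleVn ?mulr0n. Qed.

Lemma lc0_mul_eq1 u v : u * v = 1 -> lc u 0 * lc v 0 = 1.
Proof. by move=> e; rewrite -lcM0 e. Qed.

(* Rescaling [v] by the constant [lc w 0] gives [y] with [lc y 0 = 1]; then
   [y = exp L] for [L] the [euler]-primitive of [euler y / y], and the rescaling
   only contributes in [lambda]-degree 0. *)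
Lemma logderiv_exact v w : v * w = 1 ->
  exists L, forall k, (0 < k)%N -> lc (psderiv v * w) k = lderiv (lc L k).
Proof.
move=> hvw; have h00 := lc0_mul_eq1 hvw.
set v0 := lc v 0 in h00 *; set w0 := lc w 0 in h00 *.
have hc : lpsC v0 * lpsC w0 = 1 by rewrite -lpsCM h00 lpsC1.
pose y := v * lpsC w0; pose yt := w * lpsC v0.
have hy : y * yt = 1 by rewrite /y /yt mulrACA hvw mul1r mulrC hc.
pose L := euler_prim (euler y * yt).
have hE : euler y = euler L * y.
  by rewrite euler_primK ?lcM0 /= ?mulr0n ?mul0r // -mulrA (mulrC yt) hy mulr1.
have hD : psderiv y = psderiv L * y by apply: psderiv_euler; rewrite // /y lcM0.
have ev : v = y * lpsC v0 by rewrite /y -mulrA (mulrC (lpsC w0)) hc mulr1.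
have ew : w = yt * lpsC w0 by rewrite /yt -mulrA hc mulr1.
have -> : psderiv v * w = psderiv L + lpsC (lderiv v0 * w0).
  rewrite {1}ev ew psderivM hD psderivC lpsCM.
  transitivity (psderiv L * (y * yt) * (lpsC v0 * lpsC w0) +
    y * yt * (lpsC (lderiv v0) * lpsC w0)); first by ring.
  by rewrite hy hc !mulr1 !mul1r.
by exists L => -[//|k] _; rewrite lcD /= addr0.
Qed.

Lemma lres_logderiv v w : v * w = 1 -> regular (lc v 0) -> regular (lc w 0) ->
  forall k, lres (lc (psderiv v * w) k) = 0.
Proof.
move=> hvw rv rw [|k].
  by rewrite lcM0; apply: lres_regular; apply: regularM => //; apply: regular_lderiv.
by have [L hL] := logderiv_exact hvw; rewrite hL // lres_lderiv.
Qed.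

Lemma lderiv_inv x y c : x * y = 1 -> lderiv x = x * c -> lderiv y = - (c * y).
Proof.
move=> hxy hx; have : lderiv (x * y) = 0 by rewrite hxy lderiv1.
rewrite lderivM hx => e.
transitivity (lderiv y * (x * y)); first by rewrite hxy mulr1.
transitivity ((x * c * y + x * lderiv y) * y - c * y * (x * y)); first by ring.
by rewrite e hxy mul0r sub0r mulr1.
Qed.

(* By induction on [k]: [lderiv (lc u k * lc w 0)] only involves the [lc u j]
   with [j < k], and a Laurent series with regular derivative is regular. *)
Lemma lps_regular_gauge u w c : u * w = 1 -> regular (lc u 0) -> regular (lc w 0) ->
  lps_regular c -> psderiv u = u * c -> lps_regular u.
Proof.
move=> huw ru0 rw0 rc hD; have h00 := lc0_mul_eq1 huw.
have hDu0 : lderiv (lc u 0) = lc u 0 * lc c 0 by rewrite -lcM0 -hD.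
have hDw0 := lderiv_inv h00 hDu0.
move=> i; elim/ltn_ind: i => -[//|k] IH.
set r := \sum_(j < k.+1) lc u j * lc c (k.+1 - j).
have hr : regular r.
  by apply: regular_sum => j _; apply: regularM; [apply: IH | apply: rc].
have e : lderiv (lc u k.+1) = r + lc u k.+1 * lc c 0.
  by have := congr1 (fun v => lc v k.+1) hD; rewrite /= big_ord_recr /= subnn.
have ruw : regular (lc u k.+1 * lc w 0).
  apply: regular_of_lderiv; rewrite lderivM e hDw0.
  have -> : (r + lc u k.+1 * lc c 0) * lc w 0 + lc u k.+1 * - (lc c 0 * lc w 0) = r * lc w 0
    by ring.
  exact: regularM.
have -> : lc u k.+1 = lc u k.+1 * lc w 0 * lc u 0 by rewrite -mulrA (mulrC (lc w 0)) h00 mulr1.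
exact: regularM.
Qed.


Lemma laurent_polar_prim x :
  laurent (fun n => if n < 0 then lcoef x (n - 1) / n%:~R else 0).
Proof.
have [B vx] := lcoefP x; exists (B + 1) => n hn.
by case: ifP => // _; rewrite vx ?mul0r //; lia.
Qed.

Definition polar_prim x : laur := exist _ _ (laurent_polar_prim x).

Lemma regular_sub_lderiv_polar_prim x : lres x = 0 -> regular (x - lderiv (polar_prim x)).
Proof.
move=> r0 n hn; rewrite lcoefB lcoef_lderiv /=.
case: (n + 1 =P 0) => [n1|n1].
  by rewrite n1 mulr0z subr0; have -> : n = -1 by lia.
have n1neg : n + 1 < 0 by lia.
rewrite n1neg -mulrzr -mulrA mulVf ?mulr1 ?addrK ?subrr //.
by move: n1neg; case: (n + 1) => // k _; rewrite NegzE mulrNz oppr_eq0 -pmulrn natf_eq0.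
Qed.

End CharacteristicZero.

Section RawLambdaSeries.
Variable K : fieldType.
Local Notation laur := (laur K).
Local Notation lps := (lps K).
Local Notation one := (ll_of (1 : lps)).
Implicit Types (u v b : lps) (f : lser K).

Lemma lpow_laurent f : lpow f -> laurent f.
Proof. by exists 0. Qed.

Lemma Lint_valid (s : LL K) : Lint s -> Lvalid s.
Proof. by move=> rs i; apply: lpow_laurent. Qed.

Lemma Lpole1_valid (s : LL K) : Lpole1 s -> Lvalid s.
Proof. by move=> ps i; exists (-1); apply: ps. Qed.

Lemma Lint_ll_of u : Lint (ll_of u) <-> lps_regular u. Proof. by []. Qed.

Lemma LintP (s : LL K) : Lint s -> exists2 u, s = ll_of u & lps_regular u.
Proof.
move=> rs; have [u es] := Lvalid_ll_of (Lint_valid rs).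
by exists u => //; rewrite -Lint_ll_of -es.
Qed.

Lemma Llin_mulE (G : LL K -> LL K) : Llin G ->
  forall u, G (ll_of u) = ll_of (u * lps_of (G one)).
Proof.
move=> [vG linG] u; have := (linG _ _ (ll_of_valid u) (ll_of_valid 1)).2.
by rewrite Lmul_ll_of mulr1 => ->; rewrite -{1}(lps_ofK (vG _ (ll_of_valid 1))) Lmul_ll_of.
Qed.

Lemma Liso_unit (G : LL K -> LL K) : Liso G -> exists e', lps_of (G one) * e' = 1.
Proof.
move=> [linG [H [linH GK]]]; exists (lps_of (H one)); apply: ll_of_inj.
have := (GK _ (ll_of_valid 1)).1.
by rewrite (Llin_mulE linG) (Llin_mulE linH) ll_ofK !mul1r.
Qed.

Lemma lconn_intE (D : LL K -> LL K) : lconn_int D ->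
  forall u, lps_regular u -> D (ll_of u) = ll_of (lam * psderiv u + u * lps_of (D one)).
Proof.
move=> [pD [_ leibD]] u ru.
have := leibD (ll_of u) one ru lps_regular1; rewrite Lmul_ll_of mulr1 => ->.
rewrite -{1}(lps_ofK (Lpole1_valid (pD _ lps_regular1))) Lder_ll_of Llam_ll_of.
by rewrite !Lmul_ll_of Ladd_ll_of; congr ll_of; ring.
Qed.

Definition lam_conn b : LL K -> LL K :=
  fun s => Ladd (Lmul Llam (Lder s)) (Lmul s (ll_of b)).

Lemma lam_connE b u : lam_conn b (ll_of u) = ll_of (lam * psderiv u + u * b).
Proof. exact: lam_psderiv_ll_of. Qed.

Lemma lconn_u_lam_conn b : lconn_u (lam_conn b).
Proof.
split; [|split].
- by move=> _ /Lvalid_ll_of[u ->]; rewrite lam_connE; apply: ll_of_valid.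
- move=> c _ _ /Lvalid_ll_of[u ->] /Lvalid_ll_of[v ->].
  rewrite Ladd_ll_of Lcst_ll_of !Lmul_ll_of !lam_connE Ladd_ll_of Lmul_ll_of.
  by split; congr ll_of; rewrite ?raddfD ?psderivM ?psderiv_const; ring.
- move=> _ _ /Lvalid_ll_of[u ->] /Lvalid_ll_of[v ->].
  rewrite Lmul_ll_of !lam_connE Lder_ll_of Llam_ll_of !Lmul_ll_of Ladd_ll_of.
  by congr ll_of; rewrite psderivM; ring.
Qed.

Lemma lres_lc_mul_pole1 u b i : lps_regular u -> (forall j, pole1 (lc b j)) ->
  lres (lc (u * b) i) = \sum_(j < i.+1) lcoef (lc u j) 0 * lres (lc b (i - j)).
Proof. by move=> ru pb; rewrite lcM lres_sum; apply: eq_bigr => j _; rewrite lresM. Qed.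

Lemma Conn_obj_lam_conn (m : lser K) b : lcoef (lc b 0) = m ->
  (forall i, pole1 (lc b i)) ->
  (forall i, lres (lc b i) = if i == 1%N then - 2%:R^-1 else 0) ->
  Conn_obj m (lam_conn b).
Proof.
move=> b0 pb rb; split; [split; [|split] | split].
- move=> _ /LintP[u -> ru] i; rewrite lam_connE; apply: pole1D.
    exact/regular_pole1/lps_regular_lam_psderiv.
  by rewrite lcM; apply: pole1_sum => j _; apply: pole1M.
- by move=> c x y /Lint_valid vx /Lint_valid vy; apply: (lconn_u_lam_conn b).2.1.
- by move=> f s /Lint_valid vf /Lint_valid vs; apply: (lconn_u_lam_conn b).2.2.
- move=> _ /LintP[u -> ru] i; rewrite lam_connE.
  rewrite [LHS]/ll_of -/(lres _) lresD (lres_lc_mul_pole1 _ ru pb).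
  have -> : lres (lc (lam * psderiv u) i) = 0.
    by rewrite lc_lamM; case: i => [|i]; [| exact: lres_lderiv].
  under eq_bigr => j _ do rewrite rb.
  case: i => [|i]; first by rewrite add0r big_ord1 mulr0.
  rewrite add0r big_ord_recr /= subnn mulr0 addr0 big_ord_recr /= subSnn mulrC big1 ?add0r //.
  by move=> j _; rewrite ifF ?mulr0 //; apply/eqP; have := ltn_ord j; lia.
- move=> _ /LintP[u -> ru]; rewrite lam_connE /ll_of lcD lc_lamM add0r lcM0 lcoefM b0.
  by rewrite lmulC //; [exact: lcoefP | rewrite -b0; exact: lcoefP].
Qed.

Definition mul_ll b (s : LL K) := Lmul s (ll_of b).

Lemma mul_llE b u : mul_ll b (ll_of u) = ll_of (u * b).
Proof. exact: Lmul_ll_of. Qed.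

Lemma Llin_mul_ll b : Llin (mul_ll b).
Proof.
split=> [_ /Lvalid_ll_of[u ->]|_ _ /Lvalid_ll_of[u ->] /Lvalid_ll_of[v ->]].
  by rewrite mul_llE; apply: ll_of_valid.
by rewrite Ladd_ll_of Lmul_ll_of !mul_llE Ladd_ll_of Lmul_ll_of; split; congr ll_of; ring.
Qed.

Lemma gauge_transfer (A b1 b2 U v v' : lps) : v * v' = 1 ->
  lam * psderiv (U * v) + U * v * A = b1 * (U * v) ->
  lam * psderiv v + v * A = b2 * v ->
  lam * psderiv U + U * b2 = b1 * U.
Proof.
move=> hv h1 h2.
have : (lam * psderiv U + U * b2) * v = b1 * U * v.
  have e2 : U * b2 * v = U * (lam * psderiv v + v * A) by rewrite h2 mulrA.
  by rewrite mulrDl e2 -[RHS]mulrA -h1 psderivM; ring.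
by move/(congr1 (fun x => x * v')); rewrite -!mulrA hv !mulr1.
Qed.

Definition lattice_gen (e : laur) (h : lser K) := exists x, regular x /\ lcoef (x * e) = h.

Lemma image_lattice_gen (G : LL K -> LL K) : Llin G -> forall h,
  (exists h0, lpow h0 /\ G (Lc0 h0) 0%N = h) <-> lattice_gen (lc (lps_of (G one)) 0) h.
Proof.
move=> linG h; have GE x : G (Lc0 (lcoef x)) 0%N = lcoef (x * lc (lps_of (G one)) 0).
  by rewrite Lc0_ll_of (Llin_mulE linG); exact: (congr1 (@lcoef K) (lcM0 (lpsC x) _)).
split=> [[h0 [rh0 <-]]|[x [rx <-]]]; last by exists (lcoef x); rewrite GE.
by exists (exist _ h0 (lpow_laurent rh0)); rewrite -GE.
Qed.

Lemma lattice_gen_regular (e1 e2 e2' : laur) : e2 * e2' = 1 ->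
  (forall h, lattice_gen e1 h <-> lattice_gen e2 h) -> regular (e1 * e2').
Proof.
move=> he2 same.
have [x [rx /lcoef_inj ex]] : lattice_gen e2 (lcoef e1).
  by apply/same; exists 1; split; [exact: regular1 | rewrite mul1r].
by rewrite -ex -mulrA he2 mulr1.
Qed.

End RawLambdaSeries.

Section EssentialFiber.
Variable K : fieldType.
Hypothesis K_char0 : has_pchar0 K.
Local Notation laur := (laur K).
Local Notation lps := (lps K).
Local Notation one := (ll_of (1 : lps)).

Variables (m : lser K) (D : LL K -> LL K) (l0 : lser K -> Prop).
Variables (iota : LL K -> LL K) (a : LL K).
Hypotheses (hm : lpow m) (hCC : CC_obj m D l0) (hiota : Liso iota) (ha : Lvalid a).
Hypothesis hiota0 : forall h, l0 h <-> exists h0, lpow h0 /\ iota (Lc0 h0) 0%N = h.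
Hypothesis hadef : forall x, Lvalid x ->
  D (iota x) = iota (Ladd (Lmul Llam (Lder x)) (Lmul a x)).

Local Notation mu := (exist _ m (lpow_laurent hm) : laur).
Local Notation e := (lps_of (iota one)).
Local Notation A := (lps_of a).

Lemma iotaE u : iota (ll_of u) = ll_of (u * e).
Proof. exact: (Llin_mulE hiota.1). Qed.

Lemma D_iotaE u : D (ll_of (u * e)) = ll_of ((lam * psderiv u + u * A) * e).
Proof.
have aE : Lmul a (ll_of u) = Lmul (ll_of u) (ll_of A).
  by rewrite -{1}(lps_ofK ha) !Lmul_ll_of mulrC.
rewrite -iotaE hadef; last exact: ll_of_valid.
by rewrite [Lmul a _]aE lam_psderiv_ll_of iotaE.
Qed.

Lemma l0E h : l0 h <-> lattice_gen (lc e 0) h.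
Proof. by rewrite hiota0 image_lattice_gen //; exact: hiota.1. Qed.

Lemma lc_A0 : lc A 0 = mu.
Proof.
have [e' he] := Liso_unit hiota; have := hCC.2.1 _ (ll_of_valid e).
rewrite -[e]mul1r D_iotaE /ll_of !lcM0 lcD lc_lamM add0r !mul1r -(lcoefM mu) => /lcoef_inj h.
by rewrite -[lc A 0]mulr1 -(lc0_mul_eq1 he) mulrA h -mulrA (lc0_mul_eq1 he) mulr1.
Qed.

Definition fiber_e (o : fiber_obj m D l0) := lps_of (fo_iso o one).
Definition fiber_b (o : fiber_obj m D l0) := lps_of (fo_conn o one).

Section FiberObject.
Variable o : fiber_obj m D l0.

Lemma fiber_isoE u : fo_iso o (ll_of u) = ll_of (u * fiber_e o).
Proof. exact: (Llin_mulE (fo_iso_ok o).1.1). Qed.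

Lemma fiber_e_unit : exists e', fiber_e o * e' = 1.
Proof. exact: (Liso_unit (fo_iso_ok o).1). Qed.

Lemma fiber_connE u : lps_regular u ->
  fo_conn o (ll_of u) = ll_of (lam * psderiv u + u * fiber_b o).
Proof. exact: (lconn_intE (fo_conn_ok o).1). Qed.

Lemma fiber_b_ll_of : fo_conn o one = ll_of (fiber_b o).
Proof.
by rewrite /fiber_b lps_ofK //; apply: Lpole1_valid; apply: (fo_conn_ok o).1.1; exact: lps_regular1.
Qed.

Lemma pole1_fiber_b i : pole1 (lc (fiber_b o) i).
Proof. by have := (fo_conn_ok o).1.1 one lps_regular1; rewrite fiber_b_ll_of; apply. Qed.

Lemma lres_fiber_b i : lres (lc (fiber_b o) i) = if i == 1%N then - 2%:R^-1 else 0.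
Proof.
have := (fo_conn_ok o).2.1 one lps_regular1 i; rewrite fiber_b_ll_of /ll_of /lres => ->.
by case: i => [|[|i]] //=; rewrite /lone ?mulr1 ?mulr0.
Qed.

Lemma lc_fiber_b0 : lc (fiber_b o) 0 = mu.
Proof.
have := (fo_conn_ok o).2.2 one lps_regular1; rewrite fiber_b_ll_of /ll_of lcoef1 => h.
have lm := lpow_laurent hm.
by apply: lcoef_inj; rewrite h /= lmulC ?lmul1 //; exact: laurent_lone.
Qed.

Lemma fiber_gauge_eq e' : e * e' = 1 ->
  lam * psderiv (fiber_e o * e') + (fiber_e o * e') * A = fiber_b o * (fiber_e o * e').
Proof.
move=> he; have := (fo_iso_ok o).2.1 one (ll_of_valid 1).
rewrite (fo_bc o).2 ?fiber_b_ll_of; last exact: lps_regular1.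
rewrite !fiber_isoE -[1 * fiber_e o](_ : (fiber_e o * e') * e = _); last first.
  by rewrite -mulrA (mulrC e') he mulr1 mul1r.
rewrite D_iotaE => /ll_of_inj /(congr1 (fun x => x * e')).
by rewrite -!mulrA he mulr1 (mulrC (fiber_e o)) => <-.
Qed.

Lemma l0_fiber h : l0 h <-> lattice_gen (lc (fiber_e o) 0) h.
Proof. by rewrite (fo_iso_ok o).2.2 image_lattice_gen //; exact: (fo_iso_ok o).1.1. Qed.

End FiberObject.


Lemma fiber_b_diff (o1 o2 : fiber_obj m D l0) :
  exists2 c, fiber_b o1 - fiber_b o2 = lam * c & lps_regular c.
Proof.
pose c := LPS (fun i => lc (fiber_b o1 - fiber_b o2) i.+1).
have cE i : lc c i = lc (fiber_b o1) i.+1 - lc (fiber_b o2) i.+1 by [].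
exists c; first by apply: lps_eq => -[|i]; rewrite lc_lamM // lcB !lc_fiber_b0 subrr.
move=> i; apply: pole1_lres0; last by rewrite cE lresB !lres_fiber_b subrr.
by rewrite cE; apply: pole1D; [|apply: pole1N]; apply: pole1_fiber_b.
Qed.

Lemma fiber_gauge_rel (o1 o2 : fiber_obj m D l0) e2' : fiber_e o2 * e2' = 1 ->
  lam * psderiv (fiber_e o1 * e2') + fiber_e o1 * e2' * fiber_b o2 =
  fiber_b o1 * (fiber_e o1 * e2').
Proof.
move=> h2; have [e' he] := Liso_unit hiota.
apply: (@gauge_transfer _ A _ _ _ (fiber_e o2 * e') (e * e2')).
- by rewrite mulrA -(mulrA _ e') (mulrC e') he mulr1 h2.
- by rewrite mulrA -(mulrA _ e2') (mulrC e2') h2 mulr1; apply: fiber_gauge_eq.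
- exact: fiber_gauge_eq.
Qed.

Lemma fiber_gauge_regular (o1 o2 : fiber_obj m D l0) e2' : fiber_e o2 * e2' = 1 ->
  lps_regular (fiber_e o1 * e2').
Proof.
move=> h2; have [e1' h1] := fiber_e_unit o1; have [c hc rc] := fiber_b_diff o1 o2.
have hD : psderiv (fiber_e o1 * e2') = fiber_e o1 * e2' * c.
  apply: lam_lreg; rewrite (mulrC _ c) mulrA -hc.
  have -> : lam * psderiv (fiber_e o1 * e2') =
      fiber_b o1 * (fiber_e o1 * e2') - fiber_e o1 * e2' * fiber_b o2.
    by rewrite -(fiber_gauge_rel o1 h2) addrK.
  by ring.
apply: (lps_regular_gauge K_char0 (w := fiber_e o2 * e1')) rc hD.
- by rewrite mulrA -(mulrA _ e2') (mulrC e2') h2 mulr1 h1.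
- by rewrite lcM0; apply: (lattice_gen_regular (lc0_mul_eq1 h2)) => h; rewrite -!l0_fiber.
- by rewrite lcM0; apply: (lattice_gen_regular (lc0_mul_eq1 h1)) => h; rewrite -!l0_fiber.
Qed.

Lemma fiber_hom_mul (o1 o2 : fiber_obj m D l0) U U' : U * U' = 1 ->
  lps_regular U -> lps_regular U' ->
  lam * psderiv U + U * fiber_b o2 = fiber_b o1 * U -> U * fiber_e o2 = fiber_e o1 ->
  fiber_hom o1 o2 (mul_ll U).
Proof.
move=> hUU rU rU' hrel hUe.
have eU : U * fiber_b o2 = fiber_b o1 * U - lam * psderiv U by rewrite -hrel addrAC subrr add0r.
split; [|split; [|split; [|split]]].
- by move=> _ /LintP[u -> ru]; rewrite mul_llE; apply: lps_regularM.
- move=> _ /LintP[u -> ru]; exists (ll_of (u * U')); split; first exact: lps_regularM.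
  by rewrite mul_llE -mulrA (mulrC U') hUU mulr1.
- move=> _ _ /LintP[u1 -> _] /LintP[u2 -> _]; rewrite !mul_llE => /ll_of_inj e12.
  by rewrite -[u1]mulr1 -[u2]mulr1 -hUU !mulrA e12.
- move=> _ _ _ /LintP[v -> _] /LintP[u1 -> _] /LintP[u2 -> _].
  by rewrite Ladd_ll_of Lmul_ll_of !mul_llE Ladd_ll_of Lmul_ll_of; split; congr ll_of; ring.
exists (mul_ll U); split; first exact: Llin_mul_ll.
split=> //; split.
- move=> _ /LintP[u -> ru]; rewrite (fiber_connE o1 ru) !mul_llE.
  rewrite (fiber_connE o2 (lps_regularM ru rU)); congr ll_of.
  by rewrite psderivM -mulrA eU; ring.
- by move=> _ /Lvalid_ll_of[u ->]; rewrite mul_llE !fiber_isoE -mulrA hUe.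
Qed.

Lemma fiber_hom_eq (o1 o2 : fiber_obj m D l0) g U e2' : fiber_hom o1 o2 g ->
  U * fiber_e o2 = fiber_e o1 -> fiber_e o2 * e2' = 1 ->
  forall s, Lint s -> g s = mul_ll U s.
Proof.
move=> [_ [_ [_ [_ [G [linG [Gg [_ Giso]]]]]]]] hUe h2 _ /LintP[u -> ru].
rewrite -Gg // mul_llE (Llin_mulE linG); congr ll_of.
have := Giso _ (ll_of_valid u); rewrite (Llin_mulE linG) !fiber_isoE => /ll_of_inj hw.
transitivity (u * lps_of (G one) * fiber_e o2 * e2'); first by rewrite -mulrA h2 mulr1.
by rewrite hw -hUe mulrA -mulrA h2 mulr1.
Qed.

Lemma fiber_hom_unique (o1 o2 : fiber_obj m D l0) :
  exists g, fiber_hom o1 o2 g /\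
    forall g', fiber_hom o1 o2 g' -> forall s, Lint s -> g' s = g s.
Proof.
have [e1' h1] := fiber_e_unit o1; have [e2' h2] := fiber_e_unit o2.
have hUe : fiber_e o1 * e2' * fiber_e o2 = fiber_e o1 by rewrite -mulrA (mulrC e2') h2 mulr1.
have hUU : fiber_e o1 * e2' * (fiber_e o2 * e1') = 1 by rewrite mulrA hUe h1.
exists (mul_ll (fiber_e o1 * e2')); split; last by move=> g' hg'; apply: fiber_hom_eq hg' hUe h2.
exact: fiber_hom_mul hUU (fiber_gauge_regular _ h2) (fiber_gauge_regular _ h1)
  (fiber_gauge_rel _ h2) hUe.
Qed.

Lemma fiber_residue_condition (o : fiber_obj m D l0) :
  lpole1 (a 1%N) /\ forall i : nat, a i (-1) = if i == 1%N then - 2%:R^-1 else 0.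
Proof.
have [e' he] := Liso_unit hiota; have [eo' ho] := fiber_e_unit o.
have hg := fiber_gauge_eq o he; set v := fiber_e o * e' in hg.
pose v' := e * eo'.
have hvv : v * v' = 1 by rewrite /v /v' mulrA -(mulrA _ e') (mulrC e') he mulr1 ho.
have rv0 : regular (lc v 0).
  by rewrite lcM0; apply: (lattice_gen_regular (lc0_mul_eq1 he)) => h; rewrite -l0_fiber l0E.
have rv'0 : regular (lc v' 0).
  by rewrite lcM0; apply: (lattice_gen_regular (lc0_mul_eq1 ho)) => h; rewrite -l0E (l0_fiber o).
have eA : A = fiber_b o - lam * (psderiv v * v').
  transitivity (A * (v * v')); first by rewrite hvv mulr1.
  transitivity ((lam * psderiv v + v * A) * v' - lam * (psderiv v * v')); first by ring.
  by rewrite hg -mulrA hvv mulr1.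
have aE i : a i = lcoef (lc A i) by rewrite -[a in LHS](lps_ofK ha).
split; first rewrite aE eA lcB lc_lamM.
  apply: pole1D; first exact: pole1_fiber_b.
  by apply/pole1N/regular_pole1; rewrite lcM0; apply: regularM => //; apply: regular_lderiv.
move=> i; rewrite aE -/(lres _) eA lcB lresB lres_fiber_b lc_lamM.
by case: i => [|i]; rewrite ?(lres_regular regular0) ?(lres_logderiv K_char0 hvv rv0 rv'0) subr0.
Qed.

Lemma gauge_CC_iso W u u' : lc u 0 = 1 -> u * u' = 1 -> psderiv u = psderiv W * u ->
  CC_iso (fun x => iota (mul_ll u x)) (lam_conn (A + lam * psderiv W)) (@lpow K) D l0.
Proof.
move=> u0 hu hD; have [e' he] := Liso_unit hiota.
have fE v : iota (mul_ll u (ll_of v)) = ll_of (v * u * e) by rewrite mul_llE iotaE.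
have flin : Llin (fun x => iota (mul_ll u x)).
  split=> [_ /Lvalid_ll_of[v ->]|_ _ /Lvalid_ll_of[v ->] /Lvalid_ll_of[w ->]].
    by rewrite fE; apply: ll_of_valid.
  by rewrite Ladd_ll_of Lmul_ll_of !fE Ladd_ll_of Lmul_ll_of; split; congr ll_of; ring.
split; [split=> //|split].
- exists (mul_ll (u' * e')); split; first exact: Llin_mul_ll.
  have inv v : v * (u * u') * (e * e') = v by rewrite hu he !mulr1.
  move=> _ /Lvalid_ll_of[v ->]; rewrite fE mul_llE [mul_ll (u' * e') _]mul_llE fE.
  by split; congr ll_of; rewrite -[RHS]inv; ring.
- move=> _ /Lvalid_ll_of[v ->]; rewrite lam_connE !fE D_iotaE; congr ll_of.
  by rewrite psderivM hD; ring.
- move=> h; rewrite l0E; apply: iff_sym; apply: iff_trans (image_lattice_gen flin h) _.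
  have -> : (fun x => iota (mul_ll u x)) one = ll_of (u * e) by rewrite -[u in RHS]mul1r; exact: fE.
  by rewrite ll_ofK lcM0 u0 mul1r.
Qed.

Lemma fiber_of_residue_condition : lpole1 (a 1%N) ->
  (forall i : nat, a i (-1) = if i == 1%N then - 2%:R^-1 else 0) ->
  inhabited (fiber_obj m D l0).
Proof.
move=> pa1 ra; have aE i : a i = lcoef (lc A i) by rewrite -[a in LHS](lps_ofK ha).
pose W := LPS (fun k => if k is k'.+1 then - polar_prim (lc A k'.+2) else 0).
have W0 : lc W 0 = 0 by [].
have dW0 : lc (psderiv W) 0 = 0 by rewrite [LHS]/= raddf0.
have dWS k : lc (psderiv W) k.+1 = - lderiv (polar_prim (lc A k.+2)) by rewrite [LHS]/= raddfN.
pose b := A + lam * psderiv W.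
have lc_b i : pole1 (lc b i) /\ lres (lc b i) = if i == 1%N then - 2%:R^-1 else 0.
  rewrite lcD lc_lamM; case: i => [|[|k]].
  - by rewrite addr0 lc_A0; split; [exact: regular_pole1 | exact: lres_regular].
  - by rewrite dW0 addr0 /pole1 /lres -aE ra.
  - have r0 : lres (lc A k.+2) = 0 by rewrite /lres -aE ra.
    have := regular_sub_lderiv_polar_prim K_char0 r0.
    by rewrite dWS => rb; split; [exact: regular_pole1 | exact: lres_regular].
have hconn : Conn_obj m (lam_conn b).
  apply: Conn_obj_lam_conn => [|i|i]; [|exact: (lc_b i).1 | exact: (lc_b i).2].
  by rewrite lcD lc_lamM addr0 lc_A0.
have hiso := gauge_CC_iso (lc_lexp0 W) (lexpN K_char0 W) (psderiv_lexp K_char0 W0).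
exact: (inhabits (FiberObj hconn (conj (lconn_u_lam_conn b) (fun _ _ => erefl)) hiso)).
Qed.

Theorem essential_fiber_spec :
  (forall o1 o2 : fiber_obj m D l0,
     exists g, fiber_hom o1 o2 g /\
       forall g', fiber_hom o1 o2 g' -> forall s, Lint s -> g' s = g s) /\
  (inhabited (fiber_obj m D l0) <->
     lpole1 (a 1%N) /\ forall i : nat, a i (-1) = if i == 1%N then - 2%:R^-1 else 0).
Proof.
split; first exact: fiber_hom_unique.
split=> [[o]|[pa1 ra]]; [exact: fiber_residue_condition | exact: fiber_of_residue_condition].
Qed.

End EssentialFiber.

Theorem corollary4p9 (R : realType) (t d Z : pser R[i])
  (hdisc0 : disc t d 0%N = 0) (hdisc1 : disc t d 1%N != 0)
  (hZ0 : Z 0%N = 0) (hZ : forall n, ps_comp (disc t d) Z n = (n == 2%N)%:R)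
  (D : LL R[i] -> LL R[i]) (l0 : lser R[i] -> Prop)
  (hCC : CC_obj (mu_coef t Z) D l0)
  (iota : LL R[i] -> LL R[i]) (hiota : Liso iota)
  (hiota0 : forall h, l0 h <-> exists h0, lpow h0 /\ iota (Lc0 h0) 0%N = h)
  (a : LL R[i]) (ha : Lvalid a)
  (hadef : forall x, Lvalid x ->
     D (iota x) = iota (Ladd (Lmul Llam (Lder x)) (Lmul a x))) :
  (forall o1 o2 : fiber_obj (mu_coef t Z) D l0,
     exists g, fiber_hom o1 o2 g /\
       forall g', fiber_hom o1 o2 g' -> forall s, Lint s -> g' s = g s) /\
  (inhabited (fiber_obj (mu_coef t Z) D l0) <->
     (lpole1 (a 1%N) /\
      forall i : nat, a i (-1) = if i == 1%N then - (2%:R)^-1 else 0)).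
Proof.
apply: (essential_fiber_spec _ _ hCC hiota ha hiota0 hadef); first exact: pchar_num.
by case.
Qed.
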